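(* Let $(M,d)$ be a metric space, let $X\subseteq M$ with $|X|=t$, let $h$ be an integer with $1\le h\le t$, and let $Y\subseteq M$ be a nonempty finite set. Then there exists a subset $S\subseteq Y$ such that (A) $|S|\le t/h$, and (B) for every $y\in Y$, $d_S(y,1)\le 2\,d_X(y,h)$.
   Context: For a finite set $S\subseteq M$, a point $p\in M$ and an integer $1\le i\le|S|$, $d_S(p,i)$ denotes the radius of the smallest closed ball centered at $p$ containing at least $i$ points of $S$; in particular $d_S(p,1)$ is the distance from $p$ to the nearest point of $S$. *)

From Stdlib Require Import Reals List Classical ClassicalEpsilon.
Open Scope R_scope.

Definition is_metric {M : Type} (d : M -> M -> R) : Prop :=
  (forall x y, 0 <= d x y) /\
  (forall x y, d x y = 0 <-> x = y) /\
  (forall x y, d x y = d y x) /\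
  (forall x y z, d x z <= d x y + d y z).

(* Finite subsets of M are represented by duplicate-free lists. *)

Definition ball_count {M : Type} (d : M -> M -> R) (S : list M) (p : M) (r : R) : nat :=
  length (filter (fun s => if Rle_dec (d p s) r then true else false) S).

Definition is_dS_radius {M : Type} (d : M -> M -> R) (S : list M) (p : M) (i : nat) (r : R) : Prop :=
  (i <= ball_count d S p r)%nat /\
  (forall r', (i <= ball_count d S p r')%nat -> r <= r').

(* d_S(p,i): the radius of the smallest closed ball centred at p
   containing at least i points of S (well defined for 1 <= i <= |S|). *)
Definition dS {M : Type} (d : M -> M -> R) (S : list M) (p : M) (i : nat) : R :=
  epsilon (inhabits 0) (is_dS_radius d S p i).

From Stdlib Require Import Reals List.
From Stdlib Require Import Lra Lia Wf_nat ClassicalEpsilon.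
Open Scope R_scope.

(* Proof idea: a greedy net of balls around Y.

   Put r(y) := d_X(y,h), the radius of the smallest ball around y holding
   h points of X.  Repeatedly choose the y in the remaining part of Y with
   the smallest radius, put it in S, and discard every z whose ball meets
   the ball of y, i.e. with d(y,z) <= r(y) + r(z).  Then
   - every discarded z satisfies d(z,y) <= r(y) + r(z) <= 2 r(z), so
     d_S(z,1) <= 2 d_X(z,h) for all z in Y;
   - the chosen balls are pairwise disjoint, so each point of X lies in at
     most one of them; as every chosen ball holds h points of X, double
     counting gives h |S| <= |X| = t. *)

Section ListFacts.
Variable A : Type.

Lemma filter_length_mono (f g : A -> bool) (l : list A) :
  (forall x, In x l -> f x = true -> g x = true) ->
  (length (filter f l) <= length (filter g l))%nat.
Proof.
  induction l as [|a l IH]; simpl; intros Hfg; [lia|].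
  destruct (f a) eqn:Ef.
  - rewrite (Hfg a (or_introl eq_refl) Ef); simpl.
    apply le_n_S, IH; auto.
  - destruct (g a); simpl; [apply le_S|]; apply IH; auto.
Qed.

Lemma filter_length_lt (f : A -> bool) (l : list A) (y : A) :
  In y l -> f y = false -> (length (filter f l) < length l)%nat.
Proof.
  induction l as [|a l IH]; simpl; intros Hy Hf; [contradiction|].
  destruct Hy as [<-|Hy].
  - rewrite Hf. pose proof (filter_length_le f l). lia.
  - destruct (f a); simpl; specialize (IH Hy Hf); lia.
Qed.

Lemma exists_argmin (f : A -> R) (l : list A) :
  l <> nil -> exists y, In y l /\ forall z, In z l -> f y <= f z.
Proof.
  induction l as [|a l IH]; intros Hne; [congruence|].
  destruct l as [|b l'].
  - exists a; split; [left; auto|]. intros z [<-|[]]; lra.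
  - destruct IH as [y [Hy Hmin]]; [discriminate|].
    destruct (Rle_dec (f a) (f y)).
    + exists a; split; [left; auto|].
      intros z [<-|Hz]; [lra|]. specialize (Hmin z Hz); lra.
    + exists y; split; [right; auto|].
      intros z [<-|Hz]; [lra|auto].
Qed.

Lemma exists_argmax (f : A -> R) (l : list A) :
  l <> nil -> exists y, In y l /\ forall z, In z l -> f z <= f y.
Proof.
  intros Hne. destruct (exists_argmin (fun x => - f x) l Hne) as [y [Hy Hmin]].
  exists y; split; auto. intros z Hz; specialize (Hmin z Hz); lra.
Qed.

Lemma double_counting (P : A -> A -> bool) (S X : list A) :
  list_sum (map (fun s => length (filter (P s) X)) S) =
  list_sum (map (fun x => length (filter (fun s => P s x) S)) X).
Proof.
  induction X as [|x X IH]; simpl.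
  - induction S; simpl; auto.
  - rewrite <- IH. clear IH. induction S as [|s S IHS]; simpl; auto.
    rewrite IHS. destruct (P s x); simpl; lia.
Qed.

End ListFacts.

Section RadiusOfBalls.
Variable M : Type.
Variable d : M -> M -> R.

(* Membership test for the closed ball of radius rad centred at p; the filter
   inside ball_count is exactly in_ball p rad. *)
Definition in_ball (p : M) (rad : R) (x : M) : bool :=
  if Rle_dec (d p x) rad then true else false.

(* For 1 <= i <= |S| the smallest radius exists: it is d(p,s0) for the
   nearest s0 in S whose ball of radius d(p,s0) already holds i points. *)
Lemma dS_radius_exists (S : list M) (p : M) (i : nat) :
  (1 <= i)%nat -> (i <= length S)%nat -> exists rad, is_dS_radius d S p i rad.
Proof.
  intros Hi1 HiS.
  assert (HSne : S <> nil) by (intro E; subst; simpl in HiS; lia).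
  set (C := filter (fun s => Nat.leb i (ball_count d S p (d p s))) S).
  assert (HCne : C <> nil).
  { destruct (exists_argmax _ (d p) S HSne) as [m [Hm Hfar]].
    assert (Hball : (length S <= ball_count d S p (d p m))%nat).
    { unfold ball_count. rewrite <- (filter_true S) at 1.
      apply filter_length_mono. intros x Hx _.
      destruct Rle_dec as [|Hnot]; [reflexivity|]. exfalso; exact (Hnot (Hfar x Hx)). }
    assert (HmC : In m C).
    { apply filter_In; split; auto. apply Nat.leb_le; lia. }
    intro E; rewrite E in HmC; contradiction. }
  destruct (exists_argmin _ (d p) C HCne) as [s0 [Hs0 Hmin]].
  apply filter_In in Hs0 as [_ Hs0]. apply Nat.leb_le in Hs0.
  exists (d p s0); split; auto.
  intros r' Hr'.
  set (B := filter (in_ball p r') S).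
  assert (HBne : B <> nil).
  { intro E. unfold ball_count in Hr'. fold (in_ball p r') in Hr'.
    fold B in Hr'. rewrite E in Hr'; simpl in Hr'; lia. }
  destruct (exists_argmax _ (d p) B HBne) as [s1 [Hs1 Hfar]].
  apply filter_In in Hs1 as [Hs1S Hs1r].
  unfold in_ball in Hs1r. destruct Rle_dec as [Hle|]; [|discriminate].
  assert (Hs1C : In s1 C).
  { apply filter_In; split; auto. apply Nat.leb_le.
    eapply Nat.le_trans; [apply Hr'|]. apply filter_length_mono.
    intros x Hx Hin.
    assert (HxB : In x B) by (apply filter_In; split; [exact Hx|exact Hin]).
    specialize (Hfar x HxB).
    destruct (Rle_dec (d p x) (d p s1)) as [|Hnot]; [reflexivity|contradiction]. }
  specialize (Hmin s1 Hs1C). lra.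
Qed.

Lemma dS_spec (S : list M) (p : M) (i : nat) :
  (1 <= i)%nat -> (i <= length S)%nat -> is_dS_radius d S p i (dS d S p i).
Proof.
  intros Hi1 HiS. unfold dS. apply epsilon_spec, dS_radius_exists; auto.
Qed.

Lemma dS_1_le (S : list M) (p s : M) : In s S -> dS d S p 1 <= d p s.
Proof.
  intros Hs.
  assert (HS1 : (1 <= length S)%nat) by (destruct S; [contradiction|simpl; lia]).
  apply (dS_spec S p 1 (le_n 1) HS1).
  unfold ball_count.
  assert (Hin : In s (filter (fun x => if Rle_dec (d p x) (d p s) then true else false) S)).
  { apply filter_In; split; auto. destruct Rle_dec; auto. exfalso; apply n; lra. }
  destruct (filter _ S); [contradiction|simpl; lia].
Qed.

Lemma ball_radius_nonneg (S : list M) (p : M) (rad : R) :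
  (forall x y, 0 <= d x y) -> (1 <= ball_count d S p rad)%nat -> 0 <= rad.
Proof.
  intros Hd0 Hcount. unfold ball_count in Hcount.
  destruct (filter _ S) as [|x l] eqn:E; [simpl in Hcount; lia|].
  assert (Hx : In x (x :: l)) by (left; auto). rewrite <- E in Hx.
  apply filter_In in Hx as [_ Hx]. destruct Rle_dec; [|discriminate].
  specialize (Hd0 p x). lra.
Qed.

End RadiusOfBalls.

Arguments in_ball {M} d p rad x.

Section GreedyNet.
Variable M : Type.
Variable d : M -> M -> R.
Variable r : M -> R.
Hypothesis Hd : is_metric d.
Hypothesis Hr0 : forall y, 0 <= r y.

(* The closed balls B(s, r s) for s in S are pairwise disjoint, witnessed by
   r s + r s' < d s s' for every pair of positions in S. *)
Definition separated (S : list M) : Prop :=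
  ForallOrdPairs (fun s s' => r s + r s' < d s s') S.

(* A separated list has no repetitions, since r s + r s >= 0 = d s s. *)
Lemma separated_NoDup (S : list M) : separated S -> NoDup S.
Proof.
  destruct Hd as [_ [Hdeq _]].
  induction S as [|s S IH]; intros Hsep; constructor; inversion Hsep as [|? ? Hhead Htail]; subst.
  - intro Hin. rewrite Forall_forall in Hhead. specialize (Hhead s Hin).
    assert (d s s = 0) by (apply Hdeq; auto). pose proof (Hr0 s). lra.
  - auto.
Qed.

Lemma greedy_net (Z : list M) :
  exists S, incl S Z /\ separated S /\
    forall z, In z Z -> exists s, In s S /\ d z s <= 2 * r z.
Proof.
  destruct Hd as [_ [Hdeq [Hsym _]]].
  remember (length Z) as n eqn:Hn. revert Z Hn.
  induction n as [n IH] using lt_wf_ind; intros Z Hn.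
  destruct Z as [|z0 Z0].
  { exists nil; repeat split; [intros a []|constructor|intros z []]. }
  destruct (exists_argmin _ r (z0 :: Z0) ltac:(discriminate)) as [y [Hy Hmin]].
  set (far := fun z => if Rle_dec (d y z) (r y + r z) then false else true).
  set (Z' := filter far (z0 :: Z0)).
  assert (Hfar_y : far y = false).
  { unfold far. destruct Rle_dec as [|Hnot]; auto. exfalso; apply Hnot.
    assert (d y y = 0) by (apply Hdeq; auto). pose proof (Hr0 y). lra. }
  assert (Hfar : forall z, In z Z' -> r y + r z < d y z).
  { intros z Hz. apply filter_In in Hz as [_ Hz]. unfold far in Hz.
    destruct Rle_dec; [discriminate|lra]. }
  assert (Hshorter : (length Z' < n)%nat)
    by (subst n; apply filter_length_lt with (y := y); auto).
  destruct (IH _ Hshorter Z' eq_refl) as [S' [Hincl [Hsep Hcov]]].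
  exists (y :: S'); repeat split.
  - intros a [<-|Ha]; auto. apply Hincl, filter_In in Ha; tauto.
  - constructor; auto. apply Forall_forall. intros s Hs; apply Hfar, Hincl, Hs.
  - intros z Hz. destruct (Rle_dec (d y z) (r y + r z)) as [Hnear|Hnot_near].
    + exists y; split; [left; auto|]. rewrite Hsym. specialize (Hmin z Hz). lra.
    + assert (HzZ' : In z Z').
      { apply filter_In; split; auto. unfold far; destruct Rle_dec; auto; contradiction. }
      destruct (Hcov z HzZ') as [s [Hs Hdist]]. exists s; split; [right|]; auto.
Qed.

Lemma separated_balls_cover_once (S : list M) (x : M) :
  separated S -> (length (filter (fun s => in_ball d s (r s) x) S) <= 1)%nat.
Proof.
  destruct Hd as [_ [_ [Hsym Htri]]].
  induction S as [|s S IH]; intros Hsep; simpl; [lia|].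
  inversion Hsep as [|? ? Hhead Htail]; subst. rewrite Forall_forall in Hhead.
  unfold in_ball at 1. destruct Rle_dec as [Hxs|]; [|auto].
  assert (Hothers : forall s', In s' S -> in_ball d s' (r s') x = false).
  { intros s' Hs'. unfold in_ball. destruct Rle_dec as [Hxs'|]; auto.
    specialize (Hhead s' Hs'). specialize (Htri s x s').
    rewrite (Hsym x s') in Htri. lra. }
  assert (Hnone : (length (filter (fun s' => in_ball d s' (r s') x) S) <=
                   length (filter (fun _ => false) S))%nat).
  { apply filter_length_mono. intros s' Hs'. rewrite Hothers; auto. }
  rewrite filter_false in Hnone. simpl in *; lia.
Qed.

Lemma separated_packing (S X : list M) :
  separated S ->
  (list_sum (map (fun s => ball_count d X s (r s)) S) <= length X)%nat.
Proof.
  intros Hsep.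
  change (fun s => ball_count d X s (r s))
    with (fun s => length (filter (in_ball d s (r s)) X)).
  rewrite (double_counting _ (fun s x => in_ball d s (r s) x)).
  induction X as [|x X IH]; simpl; [lia|].
  pose proof (separated_balls_cover_once S x Hsep). lia.
Qed.

End GreedyNet.

Lemma count_le_ratio (M : Type) (f : M -> nat) (S : list M) (h t : nat) :
  (1 <= h)%nat -> (forall s, h <= f s)%nat -> (list_sum (map f S) <= t)%nat ->
  INR (length S) <= INR t / INR h.
Proof.
  intros Hh Hf Hsum.
  assert (Hmul : (length S * h <= t)%nat).
  { enough (length S * h <= list_sum (map f S))%nat by lia.
    clear Hsum. induction S as [|s S IH]; simpl; [lia|]. specialize (Hf s). lia. }
  assert (Hhpos : 0 < INR h) by (apply lt_0_INR; lia).
  apply (Rmult_le_reg_r (INR h)); auto.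
  unfold Rdiv. rewrite Rmult_assoc, Rinv_l, Rmult_1_r, <- mult_INR by lra.
  apply le_INR; exact Hmul.
Qed.

Theorem mainTheorem4 (M : Type) (d : M -> M -> R) (Hd : is_metric d)
  (X : list M) (t : nat) (HX : NoDup X) (HXt : length X = t)
  (h : nat) (Hh1 : (1 <= h)%nat) (Hht : (h <= t)%nat)
  (Y : list M) (HY : NoDup Y) (HYne : Y <> nil) :
  exists S : list M,
    S <> nil /\ NoDup S /\ incl S Y /\
    INR (length S) <= INR t / INR h /\
    (forall y, In y Y -> dS d S y 1 <= 2 * dS d X y h).
Proof.
  set (r := fun y => dS d X y h).
  assert (Hcount : forall y, (h <= ball_count d X y (r y))%nat)
    by (intro y; apply (dS_spec M d X y h Hh1); lia).
  assert (Hr0 : forall y, 0 <= r y).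
  { intro y. apply (ball_radius_nonneg M d X y); [apply Hd|].
    specialize (Hcount y); lia. }
  destruct (greedy_net M d r Hd Hr0 Y) as [S [Hincl [Hsep Hcov]]].
  exists S; repeat split; auto.
  - intro E. destruct Y as [|y Y']; [contradiction|].
    destruct (Hcov y (or_introl eq_refl)) as [s [Hs _]]. rewrite E in Hs; contradiction.
  - exact (separated_NoDup M d r Hd Hr0 S Hsep).
  - apply (count_le_ratio M (fun s => ball_count d X s (r s))); auto.
    rewrite <- HXt. exact (separated_packing M d r Hd S X Hsep).
  - intros y Hy. destruct (Hcov y Hy) as [s [Hs Hdist]].
    pose proof (dS_1_le M d S y s Hs). unfold r in Hdist. lra.
Qed.
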